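(* For every $i\ge 1$, the sequence $\mathcal S_{4i+2,3}$ is a valid sequence of $2i+1$ Berge $3$-moves starting from the alternating string of $n=4i+2$ pegs. Every move is legal: its source positions are occupied and its destination positions are empty at the time of the move. After the last move the configuration is sorted; more precisely: (i) the pegs occupy exactly the positions $4,5,\dots,n+3$, i.e. the string has been shifted three places to the right overall; (ii) the $\lceil n/2\rceil$ white pegs lie to the left of the $\lfloor n/2\rfloor$ black pegs.
   Context: Pegs sit in holes of a one-dimensional board whose holes are indexed by all integers; each hole holds at most one peg, and each peg is white or black. The alternating string of $n$ pegs is the configuration in which positions $1,\dots,n$ are occupied, position $i$ holding a white peg if $i$ is odd and a black peg if $i$ is even, and every other hole is empty. A Berge $3$-move $\{\,j\ i\,\}$ is allowed when positions $i,i+1,i+2$ are occupied and positions $j,j+1,j+2$ are empty. It moves the peg in position $i+t$ to position $j+t$ for $t=0,1,2$. A sequence is written as a list of integers $\{a_1\ a_2\ \dots\ a_m\}$, which denotes the moves $\{a_1\ a_2\},\{a_2\ a_3\},\dots,\{a_{m-1}\ a_m\}$ performed in this order. Concatenation of two such lists with $\cup$ means performing the first list of moves and then the second. The sequences $\mathcal S_{4i+2,3}$ are defined recursively. - $\mathcal S_{6,3}=\{7\ 2\ 6\ 1\}$, i.e. the moves $\{7\ 2\},\{2\ 6\},\{6\ 1\}$. - For $i\ge 2$, let $\mathcal S_{4i-2,3}=\{a_1\ \dots\ a_{2i}\}$ and define $\phi(x)=x+2$ if $x\le 2i$ and $\phi(x)=x+4$ if $x\ge 2i+1$. Then $\mathcal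 S_{4i+2,3}=\{\phi(a_1)\ \phi(a_2)\ \dots\ \phi(a_{2i})\}\cup\{3\ \ 2i+4\ \ 1\}$. For example, $\mathcal S_{10,3}=\{11\ 4\ 10\ 3\ 8\ 1\}$ and $\mathcal S_{14,3}=\{15\ 6\ 14\ 5\ 12\ 3\ 10\ 1\}$. *)

From Stdlib Require Import ZArith List Lia Bool.
Import ListNotations.
Open Scope Z_scope.
Open Scope bool_scope.

Inductive color := White | Black.

Definition config := Z -> option color.

Definition alternating (n : Z) : config :=
  fun p => if (1 <=? p) && (p <=? n) then
             Some (if Z.odd p then White else Black)
           else None.

Definition move_legal (c : config) (j i : Z) : Prop :=
  (forall t, 0 <= t <= 2 -> c (i + t) <> None) /\
  (forall t, 0 <= t <= 2 -> c (j + t) = None).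

Definition apply_move (c : config) (j i : Z) : config :=
  fun p => if (j <=? p) && (p <=? j + 2) then c (p - j + i)
           else if (i <=? p) && (p <=? i + 2) then None
           else c p.

(* The list {a1 a2 ... am} denotes the moves {a1 a2},{a2 a3},...,{a_{m-1} a_m}. *)
Fixpoint moves_of (l : list Z) : list (Z * Z) :=
  match l with
  | a :: ((b :: _) as t) => (a, b) :: moves_of t
  | _ => []
  end.

Fixpoint exec (c : config) (ms : list (Z * Z)) : config :=
  match ms with
  | [] => c
  | (j, i) :: ms' => exec (apply_move c j i) ms'
  end.

(* phi for the step from S_{4i-2,3} to S_{4i+2,3}. *)
Definition phi (i : Z) (x : Z) : Z := if x <=? 2 * i then x + 2 else x + 4.

(* Concatenation ∪ of two lists whose moves are performed one after the other:
   when the first list ends with the entry the second starts with (here 3),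
   the resulting list is l1 followed by the tail of l2, so that
   moves_of (cup l1 l2) = moves_of l1 ++ moves_of l2. *)
Definition cup (l1 l2 : list Z) : list Z := l1 ++ tl l2.

(* Sseq k = S_{4k+2,3} for k >= 1 (Sseq 0 is a dummy value equal to S_{6,3}). *)
Fixpoint Sseq (k : nat) : list Z :=
  match k with
  | O => [7; 2; 6; 1]
  | S O => [7; 2; 6; 1]
  | S k' =>
      let i := Z.of_nat k in
      cup (map (phi i) (Sseq k')) [3; 2 * i + 4; 1]
  end.

From Stdlib Require Import ZArith List Lia FunctionalExtensionality.
Import ListNotations.
Open Scope Z_scope.

(* Write n = 4K+2.  After the two opening moves {4K+3 2K} and {2K 4K+2}, the
   sequence alternates between a move from the left half to the right end and a
   move back into the hole just created.  Round m (m = 1..K) consists of the move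
   {4K+4-2m  2K+1-2m}, which takes a pair of alternating pegs plus one black peg
   into the right gap, followed by {2K+1-2m  4K+2-2m}, which returns two white
   pegs and a black peg to the left (round K stops after its first move, which
   is the last move {2K+4 1}).  Each round grows the white block
   2K+4-2m..2K+3 and the black block at the right end by two; the configurations
   before and after the first move of round m are [stage K m] and [mid K m], and
   [mid K K] is the sorted string on 4..4K+5. *)

Definition between (a b p : Z) : bool := (a <=? p) && (p <=? b).

Definition alt_color (p : Z) : color := if Z.odd p then White else Black.

Definition stage (K m : Z) : config := fun p =>
  if between 1 (2*K+2-2*m) p then Some (alt_color p)
  else if p =? 2*K+3-2*m then Some Black
  else if between (2*K+4-2*m) (2*K+3) p then Some White
  else if between (2*K+4) (4*K+3-2*m) p then Some (alt_color p)
  else if between (4*K+7-2*m) (4*K+5) p then Some Black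
  else None.

Definition mid (K m : Z) : config := fun p =>
  if between 1 (2*K-2*m) p then Some (alt_color p)
  else if between (2*K+4-2*m) (2*K+3) p then Some White
  else if between (2*K+4) (4*K+3-2*m) p then Some (alt_color p)
  else if p =? 4*K+4-2*m then Some White
  else if between (4*K+5-2*m) (4*K+5) p then Some Black
  else None.

Definition sorted_config (K : Z) : config := fun p =>
  if between 4 (2*K+4) p then Some White
  else if between (2*K+5) (4*K+5) p then Some Black
  else None.

(* Each parity test on e is recorded as e = 2 * Z.div2 e + b, so that lia can
   refute the impossible branches. *)
Ltac split_positions :=
  unfold apply_move, alternating, stage, mid, sorted_config, between, alt_color;
  repeat match goal with
  | |- context [ ?x <=? ?y ] =>
      let H := fresh in destruct (Z.leb_spec x y) as [H|H]; cbn [andb]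
  | |- context [ ?x =? ?y ] =>
      let H := fresh in destruct (Z.eqb_spec x y) as [H|H]
  | |- context [ Z.odd ?e ] =>
      let H := fresh in let Hd := fresh in
      pose proof (Z.div2_odd e) as Hd;
      destruct (Z.odd e) eqn:H; cbn [Z.b2z] in Hd
  end;
  try (exfalso; lia).

Ltac decide_configs :=
  split_positions; first [ reflexivity | discriminate | lia ].

Lemma opening_moves (K : Z) : 1 <= K ->
  move_legal (alternating (4*K+2)) (4*K+3) (2*K) /\
  move_legal (apply_move (alternating (4*K+2)) (4*K+3) (2*K)) (2*K) (4*K+2) /\
  apply_move (apply_move (alternating (4*K+2)) (4*K+3) (2*K)) (2*K) (4*K+2)
    = stage K 1.
Proof.
  intros HK; split; [|split]; [split; intros t Ht..|].
  1-4: decide_configs.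
  apply functional_extensionality; intros p; decide_configs.
Qed.

Lemma stage_to_mid (K m : Z) : 1 <= m <= K ->
  move_legal (stage K m) (4*K+4-2*m) (2*K+1-2*m) /\
  apply_move (stage K m) (4*K+4-2*m) (2*K+1-2*m) = mid K m.
Proof.
  intros Hm; split; [split; intros t Ht|].
  1-2: decide_configs.
  apply functional_extensionality; intros p; decide_configs.
Qed.

Lemma mid_to_stage (K m : Z) : 1 <= m < K ->
  move_legal (mid K m) (2*K+1-2*m) (4*K+4-2*(m+1)) /\
  apply_move (mid K m) (2*K+1-2*m) (4*K+4-2*(m+1)) = stage K (m+1).
Proof.
  intros Hm; split; [split; intros t Ht|].
  1-2: decide_configs.
  apply functional_extensionality; intros p; decide_configs.
Qed.

Lemma mid_last (K : Z) : 0 <= K -> mid K K = sorted_config K.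
Proof. intros HK; apply functional_extensionality; intros p; decide_configs. Qed.

Lemma sorted_config_spec (K p : Z) : 0 <= K ->
  (sorted_config K p <> None <-> 4 <= p <= 4*K+5) /\
  (sorted_config K p = Some White <-> 4 <= p <= 2*K+4) /\
  (sorted_config K p = Some Black <-> 2*K+5 <= p <= 4*K+5).
Proof.
  intros HK; split_positions;
    repeat split; intros; first [ discriminate | lia | congruence ].
Qed.

Inductive legal_run : config -> list (Z * Z) -> config -> Prop :=
  | legal_run_nil c : legal_run c [] c
  | legal_run_cons c j i ms c' :
      move_legal c j i -> legal_run (apply_move c j i) ms c' ->
      legal_run c ((j, i) :: ms) c'.

Lemma legal_run_exec (c : config) (ms : list (Z * Z)) (c' : config) :
  legal_run c ms c' ->
  exec c ms = c' /\
  (forall k : nat, (k < length ms)%nat ->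
     move_legal (exec c (firstn k ms)) (fst (nth k ms (0, 0))) (snd (nth k ms (0, 0)))).
Proof.
  induction 1 as [c|c j i ms c' Hlegal _ [IHexec IHlegal]]; split; cbn; auto.
  - intros k Hk; lia.
  - intros [|k] Hk; cbn; auto.
    apply IHlegal; cbn in Hk; lia.
Qed.

Lemma length_moves_of (l : list Z) : length (moves_of l) = pred (length l).
Proof.
  induction l as [|a [|b l] IH]; cbn in *; auto.
Qed.

Lemma moves_of_cons_cons (a b : Z) (l : list Z) :
  moves_of (a :: b :: l) = (a, b) :: moves_of (b :: l).
Proof. reflexivity. Qed.

(* [descent K m r] lists the entries 4K+4-2j, 2K+1-2j for j = m, ..., m+r:
   the tail of S_{4K+2,3} after its first two entries, when m = 1 and r = K-1. *)
Fixpoint descent (K m : Z) (r : nat) : list Z :=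
  4*K+4-2*m :: 2*K+1-2*m ::
  match r with
  | O => []
  | S r' => descent K (m+1) r'
  end.

Lemma descent_S (K m : Z) (r : nat) :
  descent K m (S r) = 4*K+4-2*m :: 2*K+1-2*m :: descent K (m+1) r.
Proof. reflexivity. Qed.

Lemma length_descent (K m : Z) (r : nat) : length (descent K m r) = (2 * r + 2)%nat.
Proof.
  revert m; induction r as [|r IH]; intros m; cbn [descent length]; auto.
  rewrite IH; lia.
Qed.

Lemma moves_of_cons_descent (a K m : Z) (r : nat) :
  moves_of (a :: descent K m r) = (a, 4*K+4-2*m) :: moves_of (descent K m r).
Proof. destruct r; reflexivity. Qed.

Lemma descent_snoc (K m : Z) (r : nat) :
  descent K m r ++ [4*K+4-2*(m + Z.of_nat r + 1); 2*K+1-2*(m + Z.of_nat r + 1)]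
  = descent K m (S r).
Proof.
  revert m; induction r as [|r IH]; intros m.
  - cbn [descent app]; repeat f_equal; lia.
  - rewrite 2!descent_S, <- (IH (m+1)).
    replace (m + Z.of_nat (S r) + 1) with (m + 1 + Z.of_nat r + 1) by lia.
    reflexivity.
Qed.

(* The left entries lie above the threshold 2K+2 of [phi (K+1)] and are shifted
   by 4, the right entries lie below it and are shifted by 2. *)
Lemma map_phi_descent (K m : Z) (r : nat) : 1 <= m -> m + Z.of_nat r <= K ->
  map (phi (K+1)) (descent K m r) = descent (K+1) m r.
Proof.
  revert m; induction r as [|r IH]; intros m Hm Hr.
  2: rewrite 2!descent_S, <- (IH (m+1)) by lia.
  all: cbn [descent map]; unfold phi.
  all: rewrite (proj2 (Z.leb_gt (4*K+4-2*m) (2*(K+1)))) by lia.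
  all: rewrite (proj2 (Z.leb_le (2*K+1-2*m) (2*(K+1)))) by lia.
  all: f_equal; [lia | f_equal; lia].
Qed.

Lemma Sseq_descent (k : nat) :
  Sseq (S k) = 4 * Z.of_nat (S k) + 3 :: 2 * Z.of_nat (S k) :: descent (Z.of_nat (S k)) 1 k.
Proof.
  induction k as [|k IH]; [reflexivity|].
  change (Sseq (S (S k)))
    with (cup (map (phi (Z.of_nat (S (S k)))) (Sseq (S k))) [3; 2 * Z.of_nat (S (S k)) + 4; 1]).
  rewrite IH, Nat2Z.inj_succ with (n := S k); unfold cup, Z.succ; cbn [tl map app].
  set (K := Z.of_nat (S k)).
  rewrite map_phi_descent by (subst K; lia).
  rewrite <- descent_snoc; unfold phi.
  rewrite (proj2 (Z.leb_gt (4*K+3) (2*(K+1)))) by (subst K; lia).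
  rewrite (proj2 (Z.leb_le (2*K) (2*(K+1)))) by lia.
  subst K; repeat first [ lia | f_equal ].
Qed.

Lemma legal_run_descent (K m : Z) (r : nat) : 1 <= m -> m + Z.of_nat r = K ->
  legal_run (stage K m) (moves_of (descent K m r)) (sorted_config K).
Proof.
  revert m; induction r as [|r IH]; intros m Hm Hr.
  - replace m with K by lia.
    destruct (stage_to_mid K K) as [Hlegal Hmove]; [lia|].
    apply legal_run_cons; [exact Hlegal|].
    rewrite Hmove, mid_last by lia; constructor.
  - rewrite descent_S, moves_of_cons_cons, moves_of_cons_descent.
    destruct (stage_to_mid K m) as [Hlegal1 Hmove1]; [lia|].
    destruct (mid_to_stage K m) as [Hlegal2 Hmove2]; [lia|].
    apply legal_run_cons; [exact Hlegal1|]; rewrite Hmove1.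
    apply legal_run_cons; [exact Hlegal2|]; rewrite Hmove2.
    apply IH; lia.
Qed.

Theorem lemma3 (i : nat) (hi : (1 <= i)%nat) :
  let n := 4 * Z.of_nat i + 2 in
  let ms := moves_of (Sseq i) in
  let final := exec (alternating n) ms in
  (* exactly 2i+1 moves *)
  length ms = (2 * i + 1)%nat /\
  (* every move is legal at the time it is performed *)
  (forall k : nat, (k < length ms)%nat ->
     move_legal (exec (alternating n) (firstn k ms))
                (fst (nth k ms (0, 0))) (snd (nth k ms (0, 0)))) /\
  (* (i) the pegs occupy exactly positions 4, ..., n+3 *)
  (forall p : Z, final p <> None <-> 4 <= p <= n + 3) /\
  (* (ii) the ceil(n/2) white pegs lie left of the floor(n/2) black pegs *)
  (forall p : Z, final p = Some White <-> 4 <= p <= 4 + (n + 1) / 2 - 1) /\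
  (forall p : Z, final p = Some Black <-> 4 + (n + 1) / 2 <= p <= n + 3).
Proof.
  destruct i as [|k]; [lia|]; cbv zeta.
  rewrite Sseq_descent; set (K := Z.of_nat (S k)).
  assert (HK : 1 <= K) by (subst K; lia).
  assert (Hrun : legal_run (alternating (4*K+2))
                   (moves_of (4*K+3 :: 2*K :: descent K 1 k)) (sorted_config K)).
  { destruct (opening_moves K HK) as [Hlegal1 [Hlegal2 Hopen]].
    rewrite moves_of_cons_cons, moves_of_cons_descent.
    apply legal_run_cons; [exact Hlegal1|].
    replace (4*K+4-2*1) with (4*K+2) by lia.
    apply legal_run_cons; [exact Hlegal2|]; rewrite Hopen.
    apply legal_run_descent; subst K; lia. }
  destruct (legal_run_exec _ _ _ Hrun) as [Hfinal Hlegal]; rewrite Hfinal.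
  replace ((4*K+2+1) / 2) with (2*K+1)
    by (apply Z.div_unique with (r := 1); lia).
  split; [|split; [exact Hlegal|]].
  - rewrite length_moves_of; cbn [length]; rewrite length_descent; lia.
  - split; [|split]; intros p;
      destruct (sorted_config_spec K p ltac:(lia)) as (Hnone & Hwhite & Hblack).
    + rewrite Hnone; lia.
    + rewrite Hwhite; lia.
    + rewrite Hblack; lia.
Qed.
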